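(* Let $k\ge2$ and let $G\in\mathbb{N}_0^k$ with $g_1>0$. If $G$ is telescopic, then $\rho_n(G)$ is telescopic for every $n\in\{2,\dots,k\}$.
   Context: $\langle A\rangle$ is the set of $\mathbb{N}_0$-linear combinations. For $G=(g_1,\dots,g_k)$ with $g_1>0$: $G_i=(g_1,\dots,g_i)$, $d_i=\gcd(G_i)$, $c(G)=(c_2,\dots,c_k)$ with $c_j=d_{j-1}/d_j$; $G$ is telescopic if $c_jg_j\in\langle G_{j-1}\rangle$ for $2\le j\le k$. For $k\ge2$ and $2\le n\le k$, $\rho_n(G)=(g_1/c_n,\dots,g_{n-1}/c_n,g_{n+1},\dots,g_k)\in\mathbb{N}_0^{k-1}$ (the entries $g_i/c_n$, $i<n$, are integers since $c_n\mid d_{n-1}$). *)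

(* Sequences G : seq nat with the paper's 1-based index j
   corresponding to position j-1 in the list. *)
From mathcomp Require Import all_boot.
Set Implicit Arguments. Unset Strict Implicit. Unset Printing Implicit Defensive.

Definition inSG (A : seq nat) (x : nat) : Prop :=
  exists a : nat -> nat, x = \sum_(i < size A) a i * nth 0 A i.

Definition dpref (G : seq nat) (i : nat) : nat := \big[gcdn/0]_(g <- take i G) g.

Definition cc (G : seq nat) (j : nat) : nat := dpref G j.-1 %/ dpref G j.

Definition gj (G : seq nat) (j : nat) : nat := nth 0 G j.-1.

Definition telescopic (G : seq nat) : Prop :=
  0 < head 0 G /\
  forall j, 2 <= j <= size G -> inSG (take j.-1 G) (cc G j * gj G j).

Definition rho (n : nat) (G : seq nat) : seq nat :=
  map (fun g => g %/ cc G n) (take n.-1 G) ++ drop n G.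

(* Let c = c_n.  Since c_n d_n = d_{n-1}, c divides g_1, ..., g_{n-1}, so
   dividing the first n-1 generators by c divides d_1, ..., d_{n-1} by c and
   leaves c_2, ..., c_{n-1} unchanged, while for j >= n the gcd d_j of rho_n(G)
   is d_{j+1} of G (as d_{n-1}/c = d_n), so c_j(rho_n(G)) = c_{j+1}(G).
   Membership c x in <A> with c | A gives x in <A/c>, which handles j < n.
   For j >= n it remains to see <G_j> in <rho_n(G)_{j-1}>: the g_i, i < n, are
   multiples of the g_i/c, and g_n lies in <G_{n-1}/c> because c_n g_n lies
   in <G_{n-1}>. *)
From mathcomp Require Import all_boot zify.

Set Implicit Arguments.
Unset Strict Implicit.
Unset Printing Implicit Defensive.

Lemma inSG_nil x : inSG [::] x <-> x = 0.
Proof.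
split; first by case=> a ->; rewrite big_ord0.
by move=> ->; exists (fun _ => 0); rewrite big_ord0.
Qed.

Lemma inSG_cons y A x :
  inSG (y :: A) x <-> exists m z, inSG A z /\ x = m * y + z.
Proof.
split=> [[a ->]|[m [z [[a ->] ->]]]].
  rewrite /= big_ord_recl /=; exists (a 0), (\sum_(i < size A) a i.+1 * nth 0 A i).
  by split=> //; exists (fun i => a i.+1).
by exists (fun i => if i is i'.+1 then a i' else m); rewrite /= big_ord_recl.
Qed.

Lemma inSG0 A : inSG A 0.
Proof.
elim: A => [|y A IH]; first exact/inSG_nil.
by apply/inSG_cons; exists 0, 0.
Qed.

Lemma inSGD A x1 x2 : inSG A x1 -> inSG A x2 -> inSG A (x1 + x2).
Proof.
elim: A x1 x2 => [|y A IH] x1 x2.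
  by move=> /inSG_nil -> /inSG_nil ->; apply/inSG_nil.
move=> /inSG_cons [m1 [z1 [h1 ->]]] /inSG_cons [m2 [z2 [h2 ->]]].
by apply/inSG_cons; exists (m1 + m2), (z1 + z2); split; [exact: IH | lia].
Qed.

Lemma inSGMl A k x : inSG A x -> inSG A (k * x).
Proof.
elim: A x => [|y A IH] x; first by move=> /inSG_nil ->; apply/inSG_nil; rewrite muln0.
move=> /inSG_cons [m [z [h ->]]].
by apply/inSG_cons; exists (k * m), (k * z); split; [exact: IH | lia].
Qed.

Lemma inSG_mem A y : y \in A -> inSG A y.
Proof.
elim: A => [|a A IH] //; rewrite in_cons => /predU1P [->|yA]; apply/inSG_cons.
  by exists 1, 0; split; [exact: inSG0 | lia].
by exists 0, y; split; [exact: IH | lia].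
Qed.

Lemma inSG_sub A B x : {in A, forall y, inSG B y} -> inSG A x -> inSG B x.
Proof.
elim: A x => [|a A IH] x AB; first by move=> /inSG_nil ->; exact: inSG0.
move=> /inSG_cons [m [z [h ->]]]; apply: inSGD.
  by apply/inSGMl/AB/mem_head.
by apply: IH h => y yA; apply/AB; rewrite in_cons yA orbT.
Qed.

Lemma inSG_map_divn c A x : 0 < c -> {in A, forall y, c %| y} ->
  inSG A (c * x) -> inSG [seq y %/ c | y <- A] x.
Proof.
move=> c_gt0 cA hx.
suff [w [xw hw]] : exists w, c * x = c * w /\ inSG [seq y %/ c | y <- A] w.
  by move/eqP: xw; rewrite eqn_pmul2l // => /eqP ->.
elim: A cA (c * x) hx => [|a A IH] cA v.
  by move=> /inSG_nil ->; exists 0; split; [rewrite muln0 | apply/inSG_nil].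
move=> /inSG_cons [m [z [h ->]]].
have [|w [-> hw]] := IH _ z h; first by move=> y yA; apply/cA; rewrite in_cons yA orbT.
exists (m * (a %/ c) + w); split; last by apply/inSG_cons; exists m, w.
by rewrite -{1}(divnK (cA a (mem_head _ _))); lia.
Qed.

Definition gcds (s : seq nat) : nat := \big[gcdn/0]_(g <- s) g.

Lemma gcds_cat s t : gcds (s ++ t) = gcdn (gcds s) (gcds t).
Proof. exact: big_cat. Qed.

Lemma gcds_dvdn s g : g \in s -> gcds s %| g.
Proof. by move=> gs; rewrite /gcds (big_rem g) ?dvdn_gcdl. Qed.

Lemma dvdn_gcds c s : {in s, forall y, c %| y} -> c %| gcds s.
Proof.
move=> cs; rewrite /gcds big_seq.
by elim/big_ind: _ => // x y cx cy; rewrite dvdn_gcd cx.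
Qed.

Lemma gcds_map_divn c s : 0 < c -> {in s, forall y, c %| y} ->
  gcds [seq y %/ c | y <- s] = gcds s %/ c.
Proof.
move=> c_gt0 cs; suff -> : gcds s = c * gcds [seq y %/ c | y <- s] by rewrite mulKn.
rewrite /gcds big_map big_distrr /=.
by apply: eq_big_seq => y /cs cy; rewrite mulnC divnK.
Qed.

Lemma dpref_gt0 G i : 0 < head 0 G -> 0 < i -> 0 < dpref G i.
Proof.
case: G i => [|g G] [|i] //= g_gt0 _.
have := gcds_dvdn (mem_head g (take i G)).
by rewrite /dpref /= -/(gcds _) lt0n; apply: contraTneq => ->; rewrite dvd0n -lt0n.
Qed.

Lemma dprefS G i : i < size G -> dpref G i.+1 = gcdn (dpref G i) (nth 0 G i).
Proof. by move=> iG; rewrite /dpref (take_nth 0) // -cats1 big_cat big_seq1. Qed.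

Lemma mul_cc_dpref G i : i < size G -> cc G i.+1 * dpref G i.+1 = dpref G i.
Proof. by move=> iG; rewrite /cc divnK // dprefS // dvdn_gcdl. Qed.

Lemma dvdn_cc_take G i y : i < size G -> y \in take i G -> cc G i.+1 %| y.
Proof.
move=> iG /gcds_dvdn; rewrite -[gcds _]/(dpref G i) -mul_cc_dpref //.
exact/dvdn_trans/dvdn_mulr.
Qed.

Section Rho.

(* [m] is n - 1, so that g_n is [nth 0 G m] and c_n is [cc G m.+1]. *)
Variables (G : seq nat) (m : nat).
Hypotheses (G1_gt0 : 0 < head 0 G) (m_gt0 : 0 < m) (mG : m < size G).

Local Notation c := (cc G m.+1).
Local Notation H := (rho m.+1 G).

Lemma size_rho : size H = (size G).-1.
Proof. by rewrite /rho size_cat size_map size_takel ?size_drop; lia. Qed.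

Lemma cc_gt0 : 0 < c.
Proof.
by have := dpref_gt0 G1_gt0 m_gt0; rewrite -(mul_cc_dpref mG) muln_gt0 => /andP[].
Qed.

Lemma dpref_divn_cc : dpref G m %/ c = dpref G m.+1.
Proof. by rewrite -(mul_cc_dpref mG) mulKn // cc_gt0. Qed.

Lemma nth_mem_take i : i < m -> nth 0 G i \in take m G.
Proof. by move=> im; rewrite -(nth_take 0 im) mem_nth // size_takel // ltnW. Qed.

Lemma dvdn_cc_take_le i y : i <= m -> y \in take i G -> c %| y.
Proof. by move=> im; rewrite -(take_takel G im) => /mem_take; apply: dvdn_cc_take. Qed.

Lemma dvdn_cc_dpref i : i <= m -> c %| dpref G i.
Proof. by move=> im; apply: dvdn_gcds => y; apply: dvdn_cc_take_le. Qed.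

Lemma take_succ_split j : m <= j ->
  take j.+1 G = take m G ++ nth 0 G m :: take (j - m) (drop m.+1 G).
Proof.
move=> mj; have -> : j.+1 = m.+1 + (j - m) by lia.
by rewrite takeD (take_nth 0 mG) -cats1 -catA.
Qed.

Lemma take_rho_le j : j <= m -> take j H = [seq y %/ c | y <- take j G].
Proof.
rewrite /rho take_cat size_map size_takel ?(ltnW mG) //.
case: ltngtP => // [jm|->] _; last by rewrite subnn take0 cats0.
by rewrite -map_take take_takel // ltnW.
Qed.

Lemma take_rho_ge j : m <= j ->
  take j H = [seq y %/ c | y <- take m G] ++ take (j - m) (drop m.+1 G).
Proof. by move=> mj; rewrite /rho take_cat size_map size_takel ?(ltnW mG) // ltnNge mj. Qed.

Lemma nth_rho_lt i : i < m -> nth 0 H i = nth 0 G i %/ c.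
Proof.
move=> im; have mG' := ltnW mG.
by rewrite /rho nth_cat size_map size_takel // im (nth_map 0) ?size_takel // nth_take.
Qed.

Lemma nth_rho_ge i : m <= i -> nth 0 H i = nth 0 G i.+1.
Proof.
move=> mi; rewrite /rho nth_cat size_map size_takel ?(ltnW mG) // ltnNge mi /=.
by rewrite nth_drop; congr nth; lia.
Qed.

Lemma dpref_rho_le j : j <= m -> dpref H j = dpref G j %/ c.
Proof.
move=> jm; rewrite /dpref take_rho_le // -/(gcds _) gcds_map_divn ?cc_gt0 //.
by move=> y; apply: dvdn_cc_take_le.
Qed.

Lemma dpref_rho_ge j : m <= j -> dpref H j = dpref G j.+1.
Proof.
move=> mj; have -> : j.+1 = m.+1 + (j - m) by lia.
rewrite /dpref take_rho_ge // takeD -!/(gcds _) !gcds_cat gcds_map_divn ?cc_gt0 //.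
  by rewrite -[gcds (take m G)]/(dpref G m) dpref_divn_cc.
by move=> y; apply: dvdn_cc_take_le (leqnn m).
Qed.

Lemma cc_rho_le j : j <= m -> cc H j = cc G j.
Proof.
move=> jm; have j'm := leq_trans (leq_pred j) jm.
rewrite /cc !dpref_rho_le // -[in RHS](divnK (dvdn_cc_dpref j'm)).
by rewrite -[in RHS](divnK (dvdn_cc_dpref jm)) divnMr // cc_gt0.
Qed.

Lemma cc_rho_gt j : m < j -> cc H j = cc G j.+1.
Proof. by move=> mj; rewrite /cc !dpref_rho_ge ?prednK //; lia. Qed.

Lemma head_rho_gt0 : 0 < head 0 H.
Proof.
have G1m : nth 0 G 0 \in take m G by apply: nth_mem_take.
rewrite -nth0 nth_rho_lt // divn_gt0 ?cc_gt0 // dvdn_leq ?nth0 //.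
exact: dvdn_cc_take_le G1m.
Qed.

Hypothesis Gtel : telescopic G.

Lemma rho_telescopic_lt j : 2 <= j <= m -> inSG (take j.-1 H) (cc H j * gj H j).
Proof.
move=> /andP[j2 jm]; rewrite cc_rho_le // /gj nth_rho_lt ?take_rho_le; try lia.
apply: inSG_map_divn; first exact: cc_gt0.
  by move=> y; apply: dvdn_cc_take_le; lia.
have cg : c %| nth 0 G j.-1 by apply/(dvdn_cc_take_le (leqnn m))/nth_mem_take; lia.
by rewrite mulnCA (mulnC c) divnK //; apply: Gtel.2; lia.
Qed.

Lemma nth_m_in_rho : inSG [seq y %/ c | y <- take m G] (nth 0 G m).
Proof.
apply: inSG_map_divn; first exact: cc_gt0.
  by move=> y; apply: dvdn_cc_take_le.
by apply: Gtel.2; lia.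
Qed.

Lemma rho_telescopic_gt j : m < j <= size H -> inSG (take j.-1 H) (cc H j * gj H j).
Proof.
case: j => // k /andP[mk kH] /=; rewrite size_rho in kH.
rewrite cc_rho_gt // /gj nth_rho_ge // take_rho_ge //.
apply: inSG_sub (Gtel.2 k.+2 _); last by lia.
rewrite /= take_succ_split // => y; rewrite mem_cat in_cons => /or3P[yG|/eqP->|yD].
- rewrite -(divnK (dvdn_cc_take_le (leqnn m) yG)) mulnC.
  by apply/inSGMl/inSG_mem; rewrite mem_cat (map_f _ yG).
- by apply: inSG_sub nth_m_in_rho => z zH; apply: inSG_mem; rewrite mem_cat zH.
- by apply: inSG_mem; rewrite mem_cat yD orbT.
Qed.

End Rho.

Theorem mainTheorem11 (G : seq nat) :
  2 <= size G -> 0 < head 0 G -> telescopic G ->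
  forall n, 2 <= n <= size G -> telescopic (rho n G).
Proof.
move=> _ G1_gt0 Gtel [|m] // /andP[m_gt0 mG].
split; first exact: head_rho_gt0.
move=> j /andP[j2 jH]; case: (leqP j m) => jm.
  by apply: rho_telescopic_lt; rewrite ?j2.
by apply: rho_telescopic_gt; rewrite ?jm.
Qed.
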